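(* Let $L$ be a pomset language. The following are equivalent: (1) $L$ is series-rational, i.e. $L=[\![e]\!]$ for some series-rational expression $e$; (2) $L=L_A(q)$ for some state $q$ of some finite and fork-acyclic pomset automaton $A$.
   Context: Fix a finite alphabet $\Sigma$. Pomsets are isomorphism classes of finite labelled posets over $\Sigma$; a pomset language is a set of pomsets. $1$ is the empty pomset; sequential composition $U\cdot V$ is the disjoint union with all elements of $U$ below all elements of $V$; parallel composition $U\parallel V$ is the disjoint union of orders. $\mathsf{SP}(\Sigma)$ is the smallest set containing $1$ and the one-element pomsets $a\in\Sigma$ closed under $\cdot,\parallel$; these lift pointwise to languages, and $L^*=\bigcup_n L^n$ with $L^0=\{1\}$, $L^{n+1}=L\cdot L^n$. Series-rational expressions: $e,f::=0\mid 1\mid a\in\Sigma\mid e+f\mid e\cdot f\mid e\parallel f\mid e^*$ with $[\![0]\!]=\emptyset$, $[\![1]\!]=\{1\}$, $[\![a]\!]=\{a\}$, $[\![e+f]\!]=[\![e]\!]\cup[\![f]\!]$, $[\![e\cdot f]\!]=[\![e]\!]\cdot[\![f]\!]$, $[\![e\parallel f]\!]=[\![e]\!]\parallel[\![f]\!]$, $[\![e^*]\!]=[\![e]\!]^*$. A pomset automaton is $A=\langle Q,F,\delta,\gamma\rangle$ with $F\subseteq Q$, $\delta:Q\times\Sigma\to2^Q$, $\gamma:Q\times\mathbb{M}(Q)\to2^Q$ ($\mathbb{M}(Q)$ finite multisets over $Q$), each $q$ having finitely many $\phi$ with $\gamma(q,\phi)\ne\emptyset$; finite if $Q$ is finite.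 The run relation $\to_A$ is the smallest relation with: $q\xrightarrow{1}_A q$; $q\xrightarrow{a}_A q'$ if $q'\in\delta(q,a)$; $q\xrightarrow{U\cdot V}_A q'$ if $q\xrightarrow{U}_A q''\xrightarrow{V}_A q'$; $q\xrightarrow{U_1\parallel\cdots\parallel U_n}_A q'$ if $q'\in\gamma(q,\{\!|q_1,\dots,q_n|\!\})$ and each $q_i\xrightarrow{U_i}_A q_i'$ for some $q_i'\in F$. $L_A(q)=\{U\in\mathsf{SP}(\Sigma)\mid\exists q'\in F.\ q\xrightarrow{U}_A q'\}$. The support relation $\preceq_A$ is the smallest preorder with $q'\preceq_A q$ whenever $q'\in\delta(q,a)$, or $q'\in\gamma(q,\phi)$, or $q'\in\phi$ with $\gamma(q,\phi)\ne\emptyset$; $A$ is fork-acyclic if $r\in\phi$ and $\gamma(q,\phi)\ne\emptyset$ imply $q\not\preceq_A r$. *)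

From Stdlib Require Import Relation_Operators.
From Stdlib Require List.
From mathcomp Require Import all_boot.
Set Implicit Arguments. Unset Strict Implicit. Unset Printing Implicit Defensive.

(** * Labelled (pre)orders over an alphabet; pomsets are their iso classes. *)
Record lposet (Sigma : Type) := LPoset {
  lp_n : nat;
  lp_lab : 'I_lp_n -> Sigma;
  lp_le : rel 'I_lp_n }.
Arguments LPoset {Sigma} lp_n lp_lab lp_le.
Arguments lp_n {Sigma} l.
Arguments lp_lab {Sigma} l _.
Arguments lp_le {Sigma} l _ _.

Section Pomsets.
Variable Sigma : finType.
Notation lp := (lposet Sigma).

Definition is_poset (P : lp) : Prop :=
  [/\ reflexive (lp_le P), antisymmetric (lp_le P) & transitive (lp_le P)].

Definition lp_iso (P1 P2 : lp) : Prop :=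
  exists f : 'I_(lp_n P1) -> 'I_(lp_n P2),
    [/\ bijective f,
        (forall x, lp_lab P2 (f x) = lp_lab P1 x) &
        (forall x y, lp_le P2 (f x) (f y) = lp_le P1 x y)].

Definition pomset_language (L : lp -> Prop) : Prop :=
  (forall P, L P -> is_poset P) /\ (forall P P', lp_iso P P' -> L P -> L P').

Definition lp_empty : lp := LPoset 0 (fun i => match i with Ordinal _ h => False_rect _ (notF h) end)
  (fun _ _ => true).
Definition lp_atom (a : Sigma) : lp := LPoset 1 (fun _ => a) (fun _ _ => true).

Definition lp_seq (U V : lp) : lp :=
  LPoset (lp_n U + lp_n V)
    (fun x => match split x with inl a => lp_lab U a | inr b => lp_lab V b end)
    (fun x y => match split x, split y with
                | inl a, inl b => lp_le U a b
                | inr a, inr b => lp_le V a b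
                | inl _, inr _ => true
                | inr _, inl _ => false end).

Definition lp_par (U V : lp) : lp :=
  LPoset (lp_n U + lp_n V)
    (fun x => match split x with inl a => lp_lab U a | inr b => lp_lab V b end)
    (fun x y => match split x, split y with
                | inl a, inl b => lp_le U a b
                | inr a, inr b => lp_le V a b
                | _, _ => false end).

Definition lp_bigpar (s : seq lp) : lp := foldr lp_par lp_empty s.

Inductive SP : lp -> Prop :=
| SP_one P : lp_n P = 0 -> SP P
| SP_atom a P : lp_iso P (lp_atom a) -> SP P
| SP_seq U V P : SP U -> SP V -> lp_iso P (lp_seq U V) -> SP P
| SP_par U V P : SP U -> SP V -> lp_iso P (lp_par U V) -> SP P.

Definition lang_seq (L K : lp -> Prop) (P : lp) : Prop :=
  exists U V, [/\ L U, K V & lp_iso P (lp_seq U V)].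
Definition lang_par (L K : lp -> Prop) (P : lp) : Prop :=
  exists U V, [/\ L U, K V & lp_iso P (lp_par U V)].
Fixpoint lang_pow (L : lp -> Prop) (n : nat) : lp -> Prop :=
  match n with
  | 0 => fun P => lp_n P = 0
  | n.+1 => lang_seq L (lang_pow L n)
  end.
Definition lang_star (L : lp -> Prop) (P : lp) : Prop := exists n, lang_pow L n P.

Inductive srexp : Type :=
| e_zero | e_one | e_atom of Sigma
| e_plus of srexp & srexp
| e_seq of srexp & srexp
| e_par of srexp & srexp
| e_star of srexp.

Fixpoint sem (e : srexp) : lp -> Prop :=
  match e with
  | e_zero => fun _ => False
  | e_one => fun P => lp_n P = 0
  | e_atom a => fun P => lp_iso P (lp_atom a)
  | e_plus e f => fun P => sem e P \/ sem f P
  | e_seq e f => lang_seq (sem e) (sem f)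
  | e_par e f => lang_par (sem e) (sem f)
  | e_star e => lang_star (sem e)
  end.

(** Finite pomset automata: states form a finType; multisets over Q are
    represented as functions Q -> nat (finite support since Q is finite). *)
Record pomset_automaton := PA {
  pa_Q : finType;
  pa_F : {set pa_Q};
  pa_delta : pa_Q -> Sigma -> {set pa_Q};
  pa_gamma : pa_Q -> {ffun pa_Q -> nat} -> {set pa_Q};
  pa_gamma_fin : forall q, exists s : seq {ffun pa_Q -> nat},
      forall phi, pa_gamma q phi != set0 -> phi \in s }.

Variable A : pomset_automaton.
Notation Q := (pa_Q A).

Definition mset_of (s : seq Q) : {ffun Q -> nat} := [ffun q => count_mem q s].

Inductive run : Q -> lp -> Q -> Prop :=
| run_one q P : lp_n P = 0 -> run q P q
| run_atom q a q' P : q' \in pa_delta q a -> lp_iso P (lp_atom a) -> run q P q'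
| run_seq q q'' q' U V P :
    run q U q'' -> run q'' V q' -> lp_iso P (lp_seq U V) -> run q P q'
| run_par q q' (ps : seq (Q * lp)) P :
    q' \in pa_gamma q (mset_of (map fst ps)) ->
    (forall x, List.In x ps -> exists qf, qf \in pa_F A /\ run x.1 x.2 qf) ->
    lp_iso P (lp_bigpar (map snd ps)) ->
    run q P q'.

Definition LA (q : Q) (P : lp) : Prop :=
  SP P /\ exists q', q' \in pa_F A /\ run q P q'.

(** Support relation: smallest preorder generated by [supp_step]
    ([supp_step q' q] means q' <=_A q directly). *)
Definition supp_step (q' q : Q) : Prop :=
  (exists a, q' \in pa_delta q a) \/
  (exists phi : {ffun Q -> nat}, q' \in pa_gamma q phi) \/
  (exists phi : {ffun Q -> nat}, 0 < phi q' /\ pa_gamma q phi != set0).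

Definition supports (q' q : Q) : Prop := clos_refl_trans Q supp_step q' q.

Definition fork_acyclic : Prop :=
  forall q (phi : {ffun Q -> nat}) r, 0 < phi r -> pa_gamma q phi != set0 -> ~ supports q r.

End Pomsets.

Arguments fork_acyclic {Sigma} A.
Arguments LA {Sigma} A q P.

(* Expressions to automata: take the subterms of e as states, plus one
   accepting state, and implement every operator other than an atom by forks,
   in the style of Thompson's construction. Forks only call strictly smaller
   subterms, so the automaton is fork-acyclic.
   Automata to expressions: in a fork-acyclic automaton, a state called by a
   fork out of a state supported by q is supported by strictly fewer states
   than q. By induction on that number the languages of these called states
   are series-rational, so runs from q are walks in a finite graph whose edge
   languages are series-rational, and McNaughton-Yamada state elimination
   turns them into an expression. *)

From HB Require Import structures.
From Stdlib Require Import Relation_Operators.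
From Stdlib Require List.
From mathcomp Require Import all_boot boolp.
Set Implicit Arguments. Unset Strict Implicit. Unset Printing Implicit Defensive.

Section Isomorphisms.
Variable Sigma : finType.
Local Notation lp := (lposet Sigma).
Local Notation iso := (@lp_iso Sigma).

Lemma lp_iso_refl P : iso P P.
Proof. by exists id; split => //; exists id. Qed.

Lemma lp_iso_sym P1 P2 : iso P1 P2 -> iso P2 P1.
Proof.
case=> f [[g fK gK] lab le]; exists g; split; first by exists f.
- by move=> x; rewrite -{2}[x]gK lab.
- by move=> x y; rewrite -{2}[x]gK -{2}[y]gK le.
Qed.

Lemma lp_iso_trans P1 P2 P3 : iso P1 P2 -> iso P2 P3 -> iso P1 P3.
Proof.
case=> f [f_bij flab fle] [g [g_bij glab gle]]; exists (g \o f); split.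
- exact: bij_comp.
- by move=> x /=; rewrite glab flab.
- by move=> x y /=; rewrite gle fle.
Qed.

Lemma lp_size0_ord (P : lp) : lp_n P = 0 -> 'I_(lp_n P) -> False.
Proof. by move=> P0 [i]; rewrite P0. Qed.

Lemma lp_iso_size0 P1 P2 : iso P1 P2 -> lp_n P1 = 0 -> lp_n P2 = 0.
Proof.
case=> f [[g _ _] _ _] P1_0; case: (lp_n P2) g => [//|k] g.
by case: (lp_size0_ord P1_0 (g ord0)).
Qed.

Lemma lp_iso0 P1 P2 : lp_n P1 = 0 -> lp_n P2 = 0 -> iso P1 P2.
Proof.
move=> /lp_size0_ord F1 /lp_size0_ord F2.
exists (fun x => match F1 x with end); split; last by move=> x; case: (F1 x).
- by exists (fun y => match F2 y with end) => x; [case: (F1 x) | case: (F2 x)].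
- by move=> x; case: (F1 x).
Qed.

Lemma split_lshift m n (i : 'I_m) : split (lshift n i) = inl i.
Proof. exact: (unsplitK (inl i)). Qed.

Lemma split_rshift m n (i : 'I_n) : split (rshift m i) = inr i.
Proof. exact: (unsplitK (inr i)). Qed.

Ltac case_split :=
  repeat (rewrite ?unsplitK ?split_lshift ?split_rshift /=;
          match goal with |- context [split ?y] => is_var y;
            rewrite -[y]splitK; case: (split y) => ? end);
  do 2 rewrite ?unsplitK ?split_lshift ?split_rshift /=.

Definition sum_map m n m' n' (f : 'I_m -> 'I_m') (g : 'I_n -> 'I_n')
    (x : 'I_(m + n)) : 'I_(m' + n') :=
  unsplit (match split x with inl a => inl (f a) | inr b => inr (g b) end).

Lemma sum_map_bij m n m' n' (f : 'I_m -> 'I_m') (g : 'I_n -> 'I_n') :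
  bijective f -> bijective g -> bijective (sum_map f g).
Proof.
case=> f' fK f'K [g' gK g'K]; exists (sum_map f' g') => x;
  by rewrite /sum_map; case_split; rewrite ?fK ?gK ?f'K ?g'K.
Qed.

Lemma lp_seq_iso U U' V V' : iso U U' -> iso V V' -> iso (lp_seq U V) (lp_seq U' V').
Proof.
case=> f [f_bij flab fle] [g [g_bij glab gle]]; exists (sum_map f g).
by split; [exact: sum_map_bij | move=> x | move=> x y]; rewrite /sum_map; case_split.
Qed.

Lemma lp_par_iso U U' V V' : iso U U' -> iso V V' -> iso (lp_par U V) (lp_par U' V').
Proof.
case=> f [f_bij flab fle] [g [g_bij glab gle]]; exists (sum_map f g).
by split; [exact: sum_map_bij | move=> x | move=> x y]; rewrite /sum_map; case_split.
Qed.

Definition sum_assoc u v w (x : 'I_(u + v + w)) : 'I_(u + (v + w)) :=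
  match split x with
  | inl y => match split y with
             | inl a => lshift _ a
             | inr b => rshift u (lshift w b)
             end
  | inr c => rshift u (rshift v c)
  end.

Definition sum_unassoc u v w (x : 'I_(u + (v + w))) : 'I_(u + v + w) :=
  match split x with
  | inl a => lshift w (lshift v a)
  | inr y => match split y with
             | inl b => lshift w (rshift u b)
             | inr c => rshift _ c
             end
  end.

Lemma lp_seqA U V W : iso (lp_seq (lp_seq U V) W) (lp_seq U (lp_seq V W)).
Proof.
exists (@sum_assoc _ _ _).
split; [exists (@sum_unassoc _ _ _) => x; rewrite /sum_unassoc | move=> x | move=> x y];
  by rewrite /sum_assoc; case_split.
Qed.

Definition sum_swap m n (x : 'I_(m + n)) : 'I_(n + m) :=
  unsplit (match split x with inl a => inr a | inr b => inl b end).

Lemma lp_parC U V : iso (lp_par U V) (lp_par V U).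
Proof.
exists (@sum_swap _ _); split; [exists (@sum_swap _ _) => x | move=> x | move=> x y];
  by rewrite /sum_swap; case_split.
Qed.

Lemma lp_seq_idl U V : lp_n U = 0 -> iso (lp_seq U V) V.
Proof.
move=> /lp_size0_ord F.
exists (fun x => match split x with inl a => match F a with end | inr b => b end).
split; [exists (@rshift (lp_n U) _) => x | move=> x | move=> x y]; case_split;
  by match goal with a : 'I_(lp_n U) |- _ => case: (F a) | _ => idtac end.
Qed.

Lemma lp_seq_idr U V : lp_n V = 0 -> iso (lp_seq U V) U.
Proof.
move=> /lp_size0_ord F.
exists (fun x => match split x with inl a => a | inr b => match F b with end end).
split; [exists (@lshift _ (lp_n V)) => x | move=> x | move=> x y]; case_split;
  by match goal with b : 'I_(lp_n V) |- _ => case: (F b) | _ => idtac end.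
Qed.

Lemma lp_par_idr U V : lp_n V = 0 -> iso (lp_par U V) U.
Proof.
move=> /lp_size0_ord F.
exists (fun x => match split x with inl a => a | inr b => match F b with end end).
split; [exists (@lshift _ (lp_n V)) => x | move=> x | move=> x y]; case_split;
  by match goal with b : 'I_(lp_n V) |- _ => case: (F b) | _ => idtac end.
Qed.

Lemma lp_bigpar1 U : iso (lp_bigpar [:: U]) U.
Proof. exact: lp_par_idr. Qed.

Lemma lp_bigpar2 U V : iso (lp_bigpar [:: U; V]) (lp_par U V).
Proof. exact: lp_par_iso (lp_iso_refl U) (lp_bigpar1 V). Qed.

End Isomorphisms.

Section SeriesRational.
Variable Sigma : finType.
Local Notation lp := (lposet Sigma).
Local Notation iso := (@lp_iso Sigma).

Lemma lang_seq_iso (L K : lp -> Prop) P P' :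
  iso P P' -> lang_seq L K P -> lang_seq L K P'.
Proof.
move=> PP' [U [V [LU KV P_UV]]]; exists U, V; split=> //.
exact: lp_iso_trans (lp_iso_sym PP') P_UV.
Qed.

Lemma lang_par_iso (L K : lp -> Prop) P P' :
  iso P P' -> lang_par L K P -> lang_par L K P'.
Proof.
move=> PP' [U [V [LU KV P_UV]]]; exists U, V; split=> //.
exact: lp_iso_trans (lp_iso_sym PP') P_UV.
Qed.

Lemma sem_iso (e : srexp Sigma) P P' : iso P P' -> sem e P -> sem e P'.
Proof.
elim: e P P' => /= [//|P P'|a P P'|e IHe f IHf P P'|e _ f _|e _ f _|e _ P P'] PP'.
- exact: lp_iso_size0.
- exact/lp_iso_trans/lp_iso_sym.
- by case=> [/(IHe _ _ PP')|/(IHf _ _ PP')]; [left|right].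
- exact: lang_seq_iso.
- exact: lang_par_iso.
- case=> [[|n] Pn]; first by exists 0; apply: lp_iso_size0 PP' Pn.
  by exists n.+1; apply: lang_seq_iso PP' Pn.
Qed.

Lemma sem_SP (e : srexp Sigma) P : sem e P -> SP P.
Proof.
elim: e P => /= [//|P|a P|e IHe f IHf P|e IHe f IHf P|e IHe f IHf P|e IHe P].
- exact: SP_one.
- exact: SP_atom.
- by case=> [/IHe|/IHf].
- by case=> U [V [/IHe SPU /IHf SPV]]; apply: SP_seq.
- by case=> U [V [/IHe SPU /IHf SPV]]; apply: SP_par.
- case=> n; elim: n P => [|n IHn] P /=; first exact: SP_one.
  by case=> U [V [/IHe SPU /IHn SPV]]; apply: SP_seq.
Qed.

Definition series_rational (L : lp -> Prop) :=
  exists e : srexp Sigma, forall P, L P <-> sem e P.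

Lemma series_rational_ext (K L : lp -> Prop) :
  (forall P, K P <-> L P) -> series_rational L -> series_rational K.
Proof. by move=> KL [e Le]; exists e => P; rewrite KL. Qed.

Lemma series_rational0 (L : lp -> Prop) : (forall P, ~ L P) -> series_rational L.
Proof. by move=> L0; exists (e_zero Sigma) => P; split=> // /L0. Qed.

Lemma series_rational1 : series_rational (fun P => lp_n P = 0).
Proof. by exists (e_one Sigma). Qed.

Lemma series_rationalU (L K : lp -> Prop) :
  series_rational L -> series_rational K -> series_rational (fun P => L P \/ K P).
Proof. by move=> [e Le] [f Kf]; exists (e_plus e f) => P /=; rewrite Le Kf. Qed.

Lemma series_rational_bigU (T : eqType) (s : seq T) (L : T -> lp -> Prop) :
  (forall x, x \in s -> series_rational (L x)) ->
  series_rational (fun P => exists x, x \in s /\ L x P).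
Proof.
elim: s => [|y s IHs] srL; first by apply: series_rational0 => P [x []].
apply: series_rational_ext (series_rationalU (srL y (mem_head y s)) (IHs _)).
- move=> P; split.
    by case=> x []; rewrite inE => /orP [/eqP -> | s_x]; [left | right; exists x].
  by case=> [Ly | [x [s_x Lx]]]; [exists y; rewrite mem_head | exists x; rewrite inE s_x orbT].
- by move=> x s_x; apply: srL; rewrite inE s_x orbT.
Qed.

Lemma series_rational_seq (L K : lp -> Prop) :
  series_rational L -> series_rational K -> series_rational (lang_seq L K).
Proof.
move=> [e Le] [f Kf]; exists (e_seq e f) => P /=.
by split=> -[U [V [LU KV P_UV]]]; exists U, V; split=> //; by [apply/Le | apply/Kf].
Qed.

Lemma series_rational_par (L K : lp -> Prop) :
  series_rational L -> series_rational K -> series_rational (lang_par L K).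
Proof.
move=> [e Le] [f Kf]; exists (e_par e f) => P /=.
by split=> -[U [V [LU KV P_UV]]]; exists U, V; split=> //; by [apply/Le | apply/Kf].
Qed.

Lemma lang_pow_ext (L K : lp -> Prop) : (forall P, L P <-> K P) ->
  forall n P, lang_pow L n P <-> lang_pow K n P.
Proof.
move=> LK; elim=> [//|n IHn] P /=.
by split=> -[U [V [LU KV P_UV]]]; exists U, V; split=> //; by [apply/LK | apply/IHn].
Qed.

Lemma series_rational_star (L : lp -> Prop) :
  series_rational L -> series_rational (lang_star L).
Proof.
move=> [e Le]; exists (e_star e) => P /=.
by split=> -[n Pn]; exists n; rewrite (lang_pow_ext Le) in Pn *.
Qed.

End SeriesRational.

Section RunInduction.
Variables (Sigma : finType) (A : pomset_automaton Sigma).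
Local Notation Q := (pa_Q A).
Local Notation lp := (lposet Sigma).
Variable R : Q -> lp -> Q -> Prop.
Hypothesis R_one : forall q P, lp_n P = 0 -> R q P q.
Hypothesis R_atom : forall q a q' P,
  q' \in pa_delta q a -> lp_iso P (lp_atom a) -> R q P q'.
Hypothesis R_seq : forall q q'' q' U V P,
  run q U q'' -> R q U q'' -> run q'' V q' -> R q'' V q' ->
  lp_iso P (lp_seq U V) -> R q P q'.
Hypothesis R_par : forall q q' (ps : seq (Q * lp)) P,
  q' \in pa_gamma q (mset_of (map fst ps)) ->
  (forall x, List.In x ps -> exists2 qf, qf \in pa_F A & run x.1 x.2 qf /\ R x.1 x.2 qf) ->
  lp_iso P (lp_bigpar (map snd ps)) -> R q P q'.

(* The generated induction principle of [run] gives no hypothesis for the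
   runs nested under [List.In]. *)
Fixpoint run_nested_ind q P q' (r : run q P q') {struct r} : R q P q'.
Proof.
case: r => {q P q'} [q P P0 | q a q' P | q q'' q' U V P r1 r2 | q q' ps P q_q' ps_acc P_ps].
- exact: R_one.
- exact: R_atom.
- exact: R_seq r1 (run_nested_ind _ _ _ r1) r2 (run_nested_ind _ _ _ r2).
- apply: (R_par q_q') P_ps => x /ps_acc [qf [qf_F r]].
  by exists qf => //; split; last exact: run_nested_ind _ _ _ r.
Qed.
End RunInduction.

Section Multisets.
Variable T : finType.

Definition mset (s : seq T) : {ffun T -> nat} := [ffun x => count_mem x s].

Lemma msetP (s1 s2 : seq T) : reflect (mset s1 = mset s2) (perm_eq s1 s2).
Proof.
apply: (iffP idP) => [/permP s12 | s12]; first by apply/ffunP => x; rewrite !ffunE s12.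
apply/allP => x _ /=.
by have := congr1 (fun phi : {ffun T -> nat} => phi x) s12; rewrite !ffunE => ->.
Qed.

Lemma mset_gt0 (s : seq T) x : (0 < mset s x) = (x \in s).
Proof. by rewrite ffunE -has_count has_pred1. Qed.

Lemma mset_small (s t : seq T) : mset s = mset t -> size t <= 1 -> s = t.
Proof. by move/msetP => st t1; apply: perm_small_eq. Qed.

Variable X : Type.
Implicit Types ps : seq (T * X).

Lemma mset_fst0 ps : mset (map fst ps) = mset [::] -> ps = [::].
Proof. by move/mset_small/(_ isT); case: ps. Qed.

Lemma mset_fst1 ps x : mset (map fst ps) = mset [:: x] -> exists U, ps = [:: (x, U)].
Proof. by move/mset_small/(_ isT); case: ps => [|[y U] [|]] //= [->]; exists U. Qed.

Lemma mset_fst2 ps x y : mset (map fst ps) = mset [:: x; y] ->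
  exists U V, ps = [:: (x, U); (y, V)] \/ ps = [:: (y, V); (x, U)].
Proof.
move/msetP => ps_xy; have := perm_size ps_xy.
case: ps ps_xy => [|[a U] [|[b V] [|]]] //= ps_xy _.
have : a \in [:: x; y] by rewrite -(perm_mem ps_xy) mem_head.
rewrite !inE => /orP [] /eqP a_eq; subst a.
- by move: ps_xy; rewrite perm_cons => /msetP/mset_small/(_ isT) [->]; exists U, V; left.
- have : perm_eq [:: b] [:: x].
    by rewrite -(perm_cons y) (perm_trans ps_xy) // (perm_catC [:: x]).
  by move=> /msetP/mset_small/(_ isT) [->]; exists V, U; right.
Qed.
End Multisets.

Section SrexpCountable.
Variable Sigma : finType.

Fixpoint tree_of_srexp (e : srexp Sigma) : GenTree.tree Sigma :=
  match e with
  | e_zero => GenTree.Node 0 [::]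
  | e_one => GenTree.Node 1 [::]
  | e_atom a => GenTree.Leaf a
  | e_plus f g => GenTree.Node 2 [:: tree_of_srexp f; tree_of_srexp g]
  | e_seq f g => GenTree.Node 3 [:: tree_of_srexp f; tree_of_srexp g]
  | e_par f g => GenTree.Node 4 [:: tree_of_srexp f; tree_of_srexp g]
  | e_star f => GenTree.Node 5 [:: tree_of_srexp f]
  end.

Fixpoint srexp_of_tree (t : GenTree.tree Sigma) : option (srexp Sigma) :=
  let bin op t1 t2 :=
    if (srexp_of_tree t1, srexp_of_tree t2) is (Some f, Some g) then Some (op f g)
    else None in
  match t with
  | GenTree.Leaf a => Some (e_atom a)
  | GenTree.Node 0 [::] => Some (e_zero Sigma)
  | GenTree.Node 1 [::] => Some (e_one Sigma)
  | GenTree.Node 2 [:: t1; t2] => bin (@e_plus Sigma) t1 t2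
  | GenTree.Node 3 [:: t1; t2] => bin (@e_seq Sigma) t1 t2
  | GenTree.Node 4 [:: t1; t2] => bin (@e_par Sigma) t1 t2
  | GenTree.Node 5 [:: t1] => omap (@e_star Sigma) (srexp_of_tree t1)
  | _ => None
  end.

Lemma tree_of_srexpK : pcancel tree_of_srexp srexp_of_tree.
Proof. by elim=> //= [f -> g -> | f -> g -> | f -> g -> | f ->]. Qed.

End SrexpCountable.

HB.instance Definition _ (Sigma : finType) :=
  Countable.copy (srexp Sigma) (pcan_type (@tree_of_srexpK Sigma)).

Section Thompson.
Variable Sigma : finType.
Local Notation lp := (lposet Sigma).
Local Notation iso := (@lp_iso Sigma).
Local Notation ex := (srexp Sigma).

Fixpoint subterms (e : ex) : seq ex := e :: match e with
  | e_plus f g | e_seq f g | e_par f g => subterms f ++ subterms g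
  | e_star f => subterms f
  | _ => [::] end.

Definition children (e : ex) : seq ex :=
  match e with
  | e_plus f g | e_seq f g | e_par f g => [:: f; g]
  | e_star f => [:: f]
  | _ => [::] end.

Fixpoint esize (e : ex) : nat :=
  match e with
  | e_plus f g | e_seq f g | e_par f g => (esize f + esize g).+1
  | e_star f => (esize f).+1
  | _ => 1 end.

Lemma subterms_refl e : e \in subterms e.
Proof. by case: e => *; rewrite inE eqxx. Qed.

Lemma subterms_trans e f g : f \in subterms e -> g \in subterms f -> g \in subterms e.
Proof.
elim: e => [||a|e1 IH1 e2 IH2|e1 IH1 e2 IH2|e1 IH1 e2 IH2|e1 IH1] /=;
  rewrite in_cons => /orP [/eqP -> // | ]; rewrite ?in_nil // ?mem_cat => f_sub g_sub;
  rewrite inE ?mem_cat.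
1-3: by case/orP: f_sub => [/IH1|/IH2] ->; rewrite ?orbT.
by rewrite IH1 ?orbT.
Qed.

Lemma children_subterms e f : f \in children e -> f \in subterms e.
Proof.
case: e => //= [g h|g h|g h|g]; rewrite !inE; try case/orP; move=> /eqP ->;
  by rewrite ?mem_cat subterms_refl ?orbT.
Qed.

Lemma subterms_child e f g : f \in subterms e -> g \in children f -> g \in subterms e.
Proof. by move=> f_sub /children_subterms; apply: subterms_trans. Qed.

Lemma esize_child e f : f \in children e -> esize f < esize e.
Proof.
case: e => //= [g h|g h|g h|g]; rewrite !inE; try case/orP; move=> /eqP ->;
  by rewrite ltnS ?leq_addr ?leq_addl.
Qed.

Variable e0 : ex.

Definition thompson_state : finType := option (seq_sub (subterms e0)).

Definition state_of (f : ex) : thompson_state := insub f.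

Definition state_lang (q : thompson_state) : lp -> Prop :=
  if q is Some s then sem (ssval s) else fun P => lp_n P = 0.

Lemma state_ofE f (f_sub : f \in subterms e0) : state_of f = Some (SeqSub f_sub).
Proof. exact: insubT. Qed.

Lemma state_lang_of f : f \in subterms e0 -> state_lang (state_of f) = sem f.
Proof. by move=> f_sub; rewrite (state_ofE f_sub). Qed.

Lemma state_lang_child (s : seq_sub (subterms e0)) f :
  f \in children (ssval s) -> state_lang (state_of f) = sem f.
Proof. by move=> /(subterms_child (ssvalP s)) /state_lang_of. Qed.

(* The forks [(l, t)] of a state: reading the pomsets of the subterms in [l]
   in parallel leads to [t]; [None] is the accepting state. *)
Definition forks (q : thompson_state) : seq (seq ex * thompson_state) :=
  if q is Some s then
    match ssval s with
    | e_one => [:: ([::], None)]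
    | e_plus f g => [:: ([:: f], None); ([:: g], None)]
    | e_seq f g => [:: ([:: f], state_of g)]
    | e_par f g => [:: ([:: f; g], None)]
    | e_star f => [:: ([::], None); ([:: f], q)]
    | _ => [::]
    end
  else [::].

Definition thompson_delta (q : thompson_state) (a : Sigma) : {set thompson_state} :=
  if q is Some s then (if ssval s == e_atom a then [set None] else set0) else set0.

Definition thompson_gamma (q : thompson_state) (phi : {ffun thompson_state -> nat}) :
    {set thompson_state} :=
  [set t | (phi, t) \in [seq (mset (map state_of l.1), l.2) | l <- forks q]].

Lemma thompson_gammaP q phi t :
  reflect (exists2 l, (l, t) \in forks q & phi = mset (map state_of l))
          (t \in thompson_gamma q phi).
Proof.
rewrite inE; apply: (iffP mapP) => [[[l t'] lt [-> ->]] | [l lt ->]]; first by exists l.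
by exists (l, t).
Qed.

Lemma thompson_gamma_fin q : exists s : seq {ffun thompson_state -> nat},
  forall phi, thompson_gamma q phi != set0 -> phi \in s.
Proof.
exists [seq mset (map state_of l.1) | l <- forks q].
move=> phi /set0Pn [t /thompson_gammaP [l lt ->]].
by apply/mapP; exists (l, t).
Qed.

Definition thompson : pomset_automaton Sigma :=
  @PA Sigma thompson_state [set None] thompson_delta thompson_gamma thompson_gamma_fin.

Definition state_rank (q : thompson_state) : nat := if q is Some s then esize (ssval s) else 0.

Lemma state_rank_of f : state_rank (state_of f) <= esize f.
Proof. by rewrite /state_of; case: insubP => [s _ <-|]. Qed.

Lemma forks_children s l t : (l, t) \in forks (Some s) -> {subset l <= children (ssval s)}.
Proof.
rewrite /forks; case: (ssval s) => //= [|f g|f g|f g|f]; rewrite !inE; try case/orP;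
  by move=> /eqP [-> _]; apply/allP; rewrite /= ?inE ?eqxx ?orbT.
Qed.

Lemma forks_state_rank q l t : (l, t) \in forks q -> state_rank t <= state_rank q.
Proof.
case: q => [s|] //; rewrite /forks; case E: (ssval s) => //= [|f g|f g|f g|f];
  rewrite !inE; try case/orP; move=> /eqP [_ ->] //=.
by rewrite E (leq_trans (state_rank_of g)) // leqW // leq_addl.
Qed.

Lemma state_rank_fork q phi r :
  thompson_gamma q phi != set0 -> 0 < phi r -> state_rank r < state_rank q.
Proof.
move=> /set0Pn [t /thompson_gammaP [l lt ->]]; rewrite mset_gt0 => /mapP [f f_l ->].
case: q lt => [s|//] lt.
exact: leq_ltn_trans (state_rank_of f) (esize_child (forks_children lt f_l)).
Qed.

Lemma state_rank_supports q' q :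
  supports (A := thompson) q' q -> state_rank q' <= state_rank q.
Proof.
elim=> [{}q' {}q | // | q1 q2 q3 _ le12 _ le23]; last exact: leq_trans le12 le23.
case=> [[a] | [[phi /thompson_gammaP [l lt _]] | [phi [r_phi /state_rank_fork lt]]]].
- by case: q => [s|] /=; [case: ifP => _; rewrite inE // => /eqP -> | rewrite inE].
- exact: forks_state_rank lt.
- exact: ltnW (lt _ r_phi).
Qed.

Lemma thompson_fork_acyclic : fork_acyclic thompson.
Proof.
move=> q phi r r_phi g_ne /state_rank_supports.
by rewrite leqNgt (state_rank_fork g_ne r_phi).
Qed.


Lemma state_lang_iso q P P' : iso P P' -> state_lang q P -> state_lang q P'.
Proof. by case: q => [s|] /= PP'; [apply: sem_iso | apply: lp_iso_size0]. Qed.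

Lemma atom_sound q a q' P W :
  q' \in thompson_delta q a -> iso P (lp_atom a) -> state_lang q' W ->
  state_lang q (lp_seq P W).
Proof.
case: q => [s|] /=; last by rewrite inE.
case: eqP => [-> | _]; rewrite inE // => /eqP -> P_a W0 /=.
exact: lp_iso_trans (lp_seq_idr P W0) P_a.
Qed.

Lemma fork_sound q l t (ps : seq (thompson_state * lp)) P W :
  (l, t) \in forks q -> mset (map fst ps) = mset (map state_of l) ->
  (forall x, List.In x ps -> state_lang x.1 x.2) -> iso P (lp_bigpar (map snd ps)) ->
  state_lang t W -> state_lang q (lp_seq P W).
Proof.
case: q => [s|] //=; have kid := @state_lang_child s; rewrite /forks.
case E: (ssval s) kid => //= [|f g|f g|f g|f] kid; rewrite !inE; try case/orP;
  move=> /eqP [-> ->] /=.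
- move=> /mset_fst0 -> _ /lp_iso_sym/lp_iso_size0 P0 W0 /=.
  by rewrite W0 P0.
- move=> /mset_fst1 [U ->] ps_lang P_U W0; left.
  have U_PW := lp_iso_sym (lp_iso_trans (lp_seq_idr P W0) (lp_iso_trans P_U (lp_bigpar1 U))).
  apply: sem_iso U_PW _.
  by rewrite -kid ?inE ?eqxx //; apply: (ps_lang _ (or_introl erefl)).
- move=> /mset_fst1 [U ->] ps_lang P_U W0; right.
  have U_PW := lp_iso_sym (lp_iso_trans (lp_seq_idr P W0) (lp_iso_trans P_U (lp_bigpar1 U))).
  apply: sem_iso U_PW _.
  by rewrite -kid ?inE ?eqxx ?orbT //; apply: (ps_lang _ (or_introl erefl)).
- move=> /mset_fst1 [U ->] ps_lang P_U gW; exists U, W; split.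
  + by rewrite -kid ?inE ?eqxx //; apply: (ps_lang _ (or_introl erefl)).
  + by rewrite -kid ?inE ?eqxx ?orbT.
  + exact: lp_seq_iso (lp_iso_trans P_U (lp_bigpar1 U)) (lp_iso_refl W).
- move=> /mset_fst2 [U [V [-> | ->]]] ps_lang P_UV W0;
    apply: lang_par_iso (lp_iso_sym (lp_seq_idr P W0)) _; exists U, V.
  + split; last exact: lp_iso_trans P_UV (lp_bigpar2 U V).
    * by rewrite -kid ?inE ?eqxx //; apply: (ps_lang _ (or_introl erefl)).
    * by rewrite -kid ?inE ?eqxx ?orbT //; apply: (ps_lang _ (or_intror (or_introl erefl))).
  + split; last exact: lp_iso_trans P_UV (lp_iso_trans (lp_bigpar2 V U) (lp_parC V U)).
    * by rewrite -kid ?inE ?eqxx //; apply: (ps_lang _ (or_intror (or_introl erefl))).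
    * by rewrite -kid ?inE ?eqxx ?orbT //; apply: (ps_lang _ (or_introl erefl)).
- move=> /mset_fst0 -> _ /lp_iso_sym/lp_iso_size0 P0 W0.
  by exists 0; rewrite /= W0 P0.
- move=> /mset_fst1 [U ->] ps_lang P_U; rewrite E => -[n Wn]; exists n.+1, U, W; split=> //.
  + by rewrite -kid ?inE ?eqxx //; apply: (ps_lang _ (or_introl erefl)).
  + exact: lp_seq_iso (lp_iso_trans P_U (lp_bigpar1 U)) (lp_iso_refl W).
Qed.

Lemma thompson_sound q P q' : run (A := thompson) q P q' ->
  forall W, state_lang q' W -> state_lang q (lp_seq P W).
Proof.
move: q P q'; apply: run_nested_ind.
- by move=> q P P0 W; apply/state_lang_iso/lp_iso_sym/lp_seq_idl.
- by move=> q a q' P qq' P_a W; apply: atom_sound qq' P_a.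
- move=> q q'' q' U V P _ sndU _ sndV P_UV W /sndV /sndU.
  apply: state_lang_iso; apply: lp_iso_sym.
  exact: lp_iso_trans (lp_seq_iso P_UV (lp_iso_refl W)) (lp_seqA U V W).
- move=> q q' ps P /thompson_gammaP [l lt ps_l] ps_acc P_ps W.
  apply: fork_sound lt ps_l _ P_ps => x /ps_acc [_ /set1P -> [_ sndx]].
  by apply: state_lang_iso (lp_seq_idr _ _) (sndx (lp_empty Sigma) erefl).
Qed.

Lemma run_fork q l t (ps : seq (thompson_state * lp)) P :
  (l, t) \in forks q -> map fst ps = map state_of l ->
  (forall x, List.In x ps -> run (A := thompson) x.1 x.2 None) ->
  iso P (lp_bigpar (map snd ps)) -> run (A := thompson) q P t.
Proof.
move=> lt ps_l ps_run; apply: (@run_par _ thompson q t ps P).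
  by apply/thompson_gammaP; exists l; rewrite // /mset_of ps_l.
by move=> x /ps_run; exists None; rewrite ?inE.
Qed.

Lemma run_fork0 q t P : ([::], t) \in forks q -> lp_n P = 0 -> run (A := thompson) q P t.
Proof. by move=> lt P0; apply: (@run_fork _ [::] _ [::]) => //; apply: lp_iso0. Qed.

Lemma run_fork1 q f t U : ([:: f], t) \in forks q ->
  run (A := thompson) (state_of f) U None -> run (A := thompson) q U t.
Proof.
move=> lt fU; apply: (@run_fork _ [:: f] _ [:: (state_of f, U)]) => //.
  by move=> x [<- | //].
exact/lp_iso_sym/lp_bigpar1.
Qed.

Lemma run_fork2 q f g t U V P : ([:: f; g], t) \in forks q ->
  run (A := thompson) (state_of f) U None -> run (A := thompson) (state_of g) V None ->
  iso P (lp_par U V) -> run (A := thompson) q P t.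
Proof.
move=> lt fU gV P_UV.
apply: (@run_fork _ [:: f; g] _ [:: (state_of f, U); (state_of g, V)]) => //.
  by move=> x [<- | [<- | //]].
exact: lp_iso_trans P_UV (lp_iso_sym (lp_bigpar2 U V)).
Qed.

Lemma thompson_complete f : f \in subterms e0 ->
  forall P, sem f P -> run (A := thompson) (state_of f) P None.
Proof.
elim: f => [||a|f IHf g IHg|f IHf g IHg|f IHf g IHg|f IHf] e_sub P //=;
  have kid := subterms_child e_sub; rewrite (state_ofE e_sub).
- exact: run_fork0.
- by move=> P_a; apply: (run_atom (a := a)); rewrite //= eqxx inE.
- have /IHf runf : f \in subterms e0 by apply: kid; rewrite mem_head.
  have /IHg rung : g \in subterms e0 by apply: kid; rewrite !inE eqxx orbT.
  by case=> [/runf | /rung]; apply: run_fork1; rewrite /forks /= !inE eqxx ?orbT.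
- have /IHf runf : f \in subterms e0 by apply: kid; rewrite mem_head.
  have /IHg rung : g \in subterms e0 by apply: kid; rewrite !inE eqxx orbT.
  move=> [U [V [/runf fU /rung gV P_UV]]]; apply: run_seq gV P_UV.
  by apply: run_fork1 fU; rewrite /forks /= inE.
- have /IHf runf : f \in subterms e0 by apply: kid; rewrite mem_head.
  have /IHg rung : g \in subterms e0 by apply: kid; rewrite !inE eqxx orbT.
  move=> [U [V [/runf fU /rung gV P_UV]]].
  by apply: run_fork2 fU gV P_UV; rewrite /forks /= inE.
- have /IHf runf : f \in subterms e0 by apply: kid; rewrite mem_head.
  case=> n; elim: n P => [|n IHn] P /=; first exact: run_fork0.
  move=> [U [V [/runf fU /IHn nV P_UV]]]; apply: run_seq nV P_UV.
  by apply: run_fork1 fU; rewrite /forks /= !inE eqxx orbT.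
Qed.

Lemma thompson_correct P : sem e0 P <-> LA thompson (state_of e0) P.
Proof.
split=> [e0P | [_ [q' [/set1P -> run_e0]]]].
  split; first exact: sem_SP e0P.
  by exists None; split; [rewrite inE | apply: thompson_complete (subterms_refl e0) _ e0P].
have := thompson_sound run_e0 (W := lp_empty Sigma) erefl.
by rewrite state_lang_of ?subterms_refl //; apply: sem_iso; apply: lp_seq_idr.
Qed.

End Thompson.

Section Walks.
Variables (Sigma : finType) (V : finType) (edge : V -> lposet Sigma -> V -> Prop).
Local Notation lp := (lposet Sigma).
Local Notation iso := (@lp_iso Sigma).

Inductive walk (S : pred V) : V -> lp -> V -> Prop :=
| walk_edge i j X P : edge i X j -> iso P X -> walk S i P j
| walk_cons i m j X Y P :
    edge i X m -> S m -> walk S m Y j -> iso P (lp_seq X Y) -> walk S i P j.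

Lemma walk_iso S i j P P' : walk S i P j -> iso P P' -> walk S i P' j.
Proof.
case=> [{}i {}j X {}P ij P_X | {}i m {}j X Y {}P im Sm mj P_XY] PP'.
- exact: walk_edge ij (lp_iso_trans (lp_iso_sym PP') P_X).
- exact: walk_cons im Sm mj (lp_iso_trans (lp_iso_sym PP') P_XY).
Qed.

Lemma walk_sub (S S' : pred V) : (forall m, S m -> S' m) ->
  forall i P j, walk S i P j -> walk S' i P j.
Proof.
move=> SS' i P j; elim=> [{}i {}j X {}P ij P_X | {}i m {}j X Y {}P im Sm _ mj P_XY].
- exact: walk_edge ij P_X.
- exact: walk_cons im (SS' _ Sm) mj P_XY.
Qed.

Lemma walk_cat S i m j U W P : walk S i U m -> S m -> walk S m W j ->
  iso P (lp_seq U W) -> walk S i P j.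
Proof.
move=> im; elim: im j W P => [{}i {}m X {}U im U_X | {}i k {}m X Y {}U ik Sk _ IH U_XY]
  j W P Sm mj P_UW.
- exact: walk_cons im Sm mj (lp_iso_trans P_UW (lp_seq_iso U_X (lp_iso_refl W))).
- apply: walk_cons ik Sk (IH _ _ _ Sm mj (lp_iso_refl _)) _.
  apply: lp_iso_trans P_UW (lp_iso_trans (lp_seq_iso U_XY (lp_iso_refl W)) _).
  exact: lp_seqA.
Qed.

Lemma walk_nil i P j : walk (fun m => m \in [::]) i P j -> exists2 X, edge i X j & iso P X.
Proof.
by case=> [{}i {}j X {}P ij P_X | {}i m {}j X Y {}P _ Sm]; [exists X | rewrite in_nil in Sm].
Qed.

Section Pivot.
Variables (k : V) (s : seq V).
Local Notation walk_s := (walk (fun m => m \in s)).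
Local Notation walk_ks := (walk (fun m => m \in k :: s)).

(* McNaughton-Yamada: a walk that may pass through [k] splits at its visits
   of [k]. *)
Definition pivot_lang i j : lp -> Prop :=
  lang_seq (fun U => walk_s i U k)
    (lang_seq (lang_star (fun W => walk_s k W k)) (fun W => walk_s k W j)).

Lemma walk_widen i P j : walk_s i P j -> walk_ks i P j.
Proof. by apply: walk_sub => m /= m_s; rewrite inE m_s orbT. Qed.

Lemma walk_pivot_split i P j : walk_ks i P j -> walk_s i P j \/ pivot_lang i j P.
Proof.
elim=> [{}i {}j X {}P ij P_X | {}i m {}j X Y {}P im Sm mj IH P_XY].
  by left; apply: walk_edge ij P_X.
case: (m =P k) => [m_k | m_k]; last first.
  have {}Sm : m \in s by move: Sm; rewrite inE => /predU1P [].
  case: IH => [mj' | [U [Z [mk Z_kj Y_UZ]]]]; first by left; apply: walk_cons im Sm mj' P_XY.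
  right; exists (lp_seq X U), Z; split=> //; first exact: walk_cons im Sm mk (lp_iso_refl _).
  apply: lp_iso_trans P_XY (lp_iso_trans (lp_seq_iso (lp_iso_refl X) Y_UZ) _).
  exact/lp_iso_sym/lp_seqA.
subst m; right; exists X, Y; split; [exact: walk_edge im (lp_iso_refl X) | | exact: P_XY].
case: IH => [kj | [U [Z [kk [W [T [[n Wn] Tj Z_WT]]] Y_UZ]]]].
  exists (lp_empty Sigma), Y; split=> //; first by exists 0.
  exact/lp_iso_sym/lp_seq_idl.
exists (lp_seq U W), T; split=> //.
  by exists n.+1, U, W; split=> //; apply: lp_iso_refl.
apply: lp_iso_trans Y_UZ (lp_iso_trans (lp_seq_iso (lp_iso_refl U) Z_WT) _).
exact/lp_iso_sym/lp_seqA.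
Qed.

Lemma walk_star n W : lang_pow (fun W => walk_s k W k) n W -> lp_n W = 0 \/ walk_ks k W k.
Proof.
elim: n W => [|n IHn] W /=; first by left.
move=> [U [W' [/walk_widen kUk /IHn [W'0 | kW'k] W_UW']]]; right.
  exact: walk_iso kUk (lp_iso_sym (lp_iso_trans W_UW' (lp_seq_idr U W'0))).
exact: walk_cat kUk (mem_head k s) kW'k W_UW'.
Qed.

Lemma walk_pivot_join i P j : walk_s i P j \/ pivot_lang i j P -> walk_ks i P j.
Proof.
case=> [|[U [Z [ik [W [T [[n Wn] kj Z_WT]]] P_UZ]]]]; first exact: walk_widen.
have [W0 | kWk] := walk_star Wn.
  apply: walk_cat (walk_widen ik) (mem_head k s) (walk_widen kj) _.
  exact: lp_iso_trans P_UZ (lp_seq_iso (lp_iso_refl U) (lp_iso_trans Z_WT (lp_seq_idl T W0))).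
apply: walk_cat (walk_widen ik) (mem_head k s) _ P_UZ.
exact: walk_cat kWk (mem_head k s) (walk_widen kj) Z_WT.
Qed.
End Pivot.

Hypothesis edge_rational : forall i j, series_rational (fun P => edge i P j).

Lemma series_rational_walk (s : seq V) i j :
  series_rational (fun P => walk (fun m => m \in s) i P j).
Proof.
elim: s i j => [|k s IHs] i j.
  have [e edge_e] := edge_rational i j; exists e => P; split.
    by move=> /walk_nil [X /edge_e Xe P_X]; apply: sem_iso (lp_iso_sym P_X) Xe.
  by move=> /edge_e ij; apply: walk_edge ij (lp_iso_refl P).
apply: series_rational_ext (series_rationalU (IHs i j) (series_rational_seq (IHs i k)
  (series_rational_seq (series_rational_star (IHs k k)) (IHs k j)))) => P.
by split; [apply: walk_pivot_split | apply: walk_pivot_join].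
Qed.

Lemma series_rational_walkT i j : series_rational (fun P => walk predT i P j).
Proof.
apply: series_rational_ext (series_rational_walk (enum V) i j) => P.
by split; apply: walk_sub => m; rewrite mem_enum.
Qed.

End Walks.

Section FromAutomata.
Variables (Sigma : finType) (A : pomset_automaton Sigma).
Local Notation Q := (pa_Q A).
Local Notation lp := (lposet Sigma).
Local Notation iso := (@lp_iso Sigma).
Implicit Types (q s t : Q) (P X : lp).

Definition accepted (q : Q) (P : lp) := exists qf, qf \in pa_F A /\ run q P qf.

Definition transition (s : Q) (X : lp) (t : Q) : Prop :=
  (exists a, t \in pa_delta s a /\ iso X (lp_atom a)) \/
  (exists ps : seq (Q * lp), [/\ t \in pa_gamma s (mset (map fst ps)),
     forall x, List.In x ps -> accepted x.1 x.2 & iso X (lp_bigpar (map snd ps))]).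

Lemma run_iso (q q' : Q) P P' : run q P q' -> iso P' P -> run q P' q'.
Proof.
case=> {q P q'} [q P P0 | q a q' P qq' P_a | q q'' q' U V P qU Vq' P_UV
  | q q' ps P qq' ps_acc P_ps] P'P.
- exact/run_one/(lp_iso_size0 (lp_iso_sym P'P)).
- exact: run_atom qq' (lp_iso_trans P'P P_a).
- exact: run_seq qU Vq' (lp_iso_trans P'P P_UV).
- exact: run_par qq' ps_acc (lp_iso_trans P'P P_ps).
Qed.

Lemma transition_run s X t : transition s X t -> run s X t.
Proof.
case=> [[a [st X_a]] | [ps [st ps_acc X_ps]]]; first exact: run_atom st X_a.
exact: run_par st ps_acc X_ps.
Qed.

Lemma supports_refl s : supports s s.
Proof. exact: rt_refl. Qed.

Lemma supports_trans s t u : supports s t -> supports t u -> supports s u.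
Proof. exact: rt_trans. Qed.

Lemma run_supports (q q' : Q) P : run q P q' -> supports q' q.
Proof.
move: q P q'; apply: run_nested_ind
  => [q P _ | q a q' P qq' _ | q q'' q' U V P _ q''q _ q'q'' _ | q q' ps P qq' _ _].
- exact: supports_refl.
- by apply: rt_step; left; exists a.
- exact: supports_trans q'q'' q''q.
- by apply: rt_step; right; left; exists (mset_of (map fst ps)).
Qed.

(* Restricting to states supported by [q0] makes the forks call only states
   of smaller support than [q0] (see support_size_fork). *)
Definition local_transition (q0 s : Q) (X : lp) (t : Q) := supports s q0 /\ transition s X t.

Lemma run_walk (q0 q q' : Q) P : run q P q' -> supports q q0 ->
  (q = q' /\ lp_n P = 0) \/ walk (local_transition q0) predT q P q'.
Proof.
move: q P q'; apply: run_nested_ind.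
- by move=> q P P0 _; left.
- move=> q a q' P qq' P_a q_q0; right; apply: walk_edge (lp_iso_refl P).
  by split=> //; left; exists a.
- move=> q q'' q' U V P qU IHU Vq' IHV P_UV q_q0.
  have q''_q0 : supports q'' q0 := supports_trans (run_supports qU) q_q0.
  case: (IHU q_q0) => [[q_q'' U0] | wU]; case: (IHV q''_q0) => [[q''_q' V0] | wV].
  + left; split; first exact: etrans q_q'' q''_q'.
    by apply: lp_iso_size0 (lp_iso_sym P_UV) _; rewrite /= U0 V0.
  + right; rewrite q_q''; apply: walk_iso wV _.
    exact: lp_iso_sym (lp_iso_trans P_UV (lp_seq_idl V U0)).
  + right; rewrite -q''_q'; apply: walk_iso wU _.
    exact: lp_iso_sym (lp_iso_trans P_UV (lp_seq_idr U V0)).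
  + by right; apply: walk_cat wU _ wV P_UV.
- move=> q q' ps P qq' ps_acc P_ps q_q0; right; apply: walk_edge (lp_iso_refl P).
  split=> //; right; exists ps; split=> // x /ps_acc [qf qf_F [xqf _]].
  by exists qf.
Qed.

Lemma walk_run (q0 q q' : Q) S P : walk (local_transition q0) S q P q' -> run q P q'.
Proof.
elim=> [{}q {}q' X {}P [_ /transition_run qX] P_X
       | {}q m {}q' X Y {}P [_ /transition_run qX] _ _ mY P_XY].
- exact: run_iso qX P_X.
- exact: run_seq qX mY P_XY.
Qed.

Lemma accepted_walk q P : accepted q P <-> exists qf, qf \in enum Q /\
  (qf \in pa_F A /\ ((q = qf /\ lp_n P = 0) \/ walk (local_transition q) predT q P qf)).
Proof.
split=> [[qf [qf_F qP]] | [qf [_ [qf_F [[-> P0] | w]]]]]; exists qf; split=> //.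
- by rewrite mem_enum.
- by split=> //; apply: run_walk qP (supports_refl q).
- exact: run_one.
- exact: walk_run w.
Qed.

Section ForkAcyclic.
Hypothesis A_fork_acyclic : fork_acyclic A.

Definition support_size q := #|[set t | `[< supports t q >]]|.

Lemma support_size_fork s q r (phi : {ffun Q -> nat}) :
  supports s q -> 0 < phi r -> pa_gamma s phi != set0 -> support_size r < support_size q.
Proof.
move=> sq r_phi s_phi; have rs : supports r s by apply: rt_step; right; right; exists phi.
apply/proper_card/properP; split.
  by apply/subsetP => t; rewrite !inE => /asboolP tr; apply/asboolP;
    apply: supports_trans tr (supports_trans rs sq).
exists q; rewrite !inE; first exact/asboolP/supports_refl.
by apply/asboolP => qr; apply: A_fork_acyclic r_phi s_phi (supports_trans sq qr).
Qed.

Definition par_lang (l : seq Q) X : Prop :=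
  exists ps : seq (Q * lp), [/\ map fst ps = l,
    forall x, List.In x ps -> accepted x.1 x.2 & iso X (lp_bigpar (map snd ps))].

Definition fork_lang (phi : {ffun Q -> nat}) X : Prop :=
  exists ps : seq (Q * lp), [/\ mset (map fst ps) = phi,
    forall x, List.In x ps -> accepted x.1 x.2 & iso X (lp_bigpar (map snd ps))].

Lemma series_rational_par_lang (l : seq Q) :
  (forall r, r \in l -> series_rational (accepted r)) -> series_rational (par_lang l).
Proof.
elim: l => [|r l IHl] l_rat.
  apply: series_rational_ext (series_rational1 Sigma) => X; split.
    move=> [ps [ps_nil _ X_ps]]; case: ps ps_nil X_ps => [_ X0 | //].
    exact: lp_iso_size0 (lp_iso_sym X0) _.
  by move=> X0; exists [::]; split=> //; apply: lp_iso0.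
have r_rat := l_rat r (mem_head r l).
have /IHl l'_rat : forall r', r' \in l -> series_rational (accepted r').
  by move=> r' l_r'; apply: l_rat; rewrite inE l_r' orbT.
apply: series_rational_ext (series_rational_par r_rat l'_rat) => X; split.
  case=> -[|[r' U] ps] [//= [<- ps_l] ps_acc X_ps].
  exists U, (lp_bigpar (map snd ps)); split=> //; first exact: ps_acc (or_introl erefl).
  by exists ps; split=> // [x psx | ]; [apply: ps_acc; right | apply: lp_iso_refl].
case=> U [W [rU [ps [ps_l ps_acc W_ps]] X_UW]]; exists ((r, U) :: ps); split.
- by rewrite /= ps_l.
- by move=> x [<- | /ps_acc].
- exact: lp_iso_trans X_UW (lp_par_iso (lp_iso_refl U) W_ps).
Qed.

Lemma series_rational_fork_lang (phi : {ffun Q -> nat}) :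
  (forall r, 0 < phi r -> series_rational (accepted r)) -> series_rational (fork_lang phi).
Proof.
move=> phi_rat; have [[l0 l0_phi] | no_l0] := pselect (exists l0, mset l0 = phi); last first.
  by apply: series_rational0 => X [ps [ps_phi _ _]]; apply: no_l0; exists (map fst ps).
have fork_perm X : fork_lang phi X <-> exists l, l \in permutations l0 /\ par_lang l X.
  rewrite -l0_phi.
  split=> [[ps [/msetP ps_l0 ps_acc X_ps]] | [l [l_l0 [ps [ps_l ps_acc X_ps]]]]].
    by exists (map fst ps); rewrite mem_permutations; split=> //; exists ps.
  by exists ps; split=> //; apply/msetP; rewrite ps_l -mem_permutations.
apply: series_rational_ext fork_perm _; apply: series_rational_bigU => l l_l0.
apply: series_rational_par_lang => r l_r; apply: phi_rat.
by rewrite mem_permutations in l_l0; rewrite -l0_phi mset_gt0 -(perm_mem l_l0).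
Qed.

Lemma transitionE s t (fl : seq {ffun Q -> nat}) :
  (forall phi, pa_gamma s phi != set0 -> phi \in fl) -> forall X, transition s X t <->
  (exists a, a \in enum Sigma /\ (t \in pa_delta s a /\ iso X (lp_atom a))) \/
  (exists phi, phi \in fl /\ (t \in pa_gamma s phi /\ fork_lang phi X)).
Proof.
move=> fl_gamma X; split.
  case=> [[a aX] | [ps [tps ps_acc X_ps]]]; first by left; exists a; rewrite mem_enum.
  right; exists (mset (map fst ps)); split; last by split=> //; exists ps.
  by apply: fl_gamma; apply/set0Pn; exists t.
case=> [[a [_ aX]] | [phi [_ [tphi [ps [ps_phi ps_acc X_ps]]]]]]; first by left; exists a.
by right; exists ps; rewrite ps_phi.
Qed.

Lemma series_rational_local_transition q0 s t :
  (forall r, support_size r < support_size q0 -> series_rational (accepted r)) ->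
  series_rational (fun X => local_transition q0 s X t).
Proof.
move=> IH; have [sq0 | nsq0] := pselect (supports s q0); last first.
  by apply: series_rational0 => X [].
have [fl fl_gamma] := pa_gamma_fin s.
apply: series_rational_ext (series_rationalU
  (series_rational_bigU (s := enum Sigma)
     (L := fun a X => t \in pa_delta s a /\ iso X (lp_atom a)) _)
  (series_rational_bigU (s := fl)
     (L := fun phi X => t \in pa_gamma s phi /\ fork_lang phi X) _)).
- by move=> X; rewrite -(transitionE t fl_gamma); split=> [[]|].
- move=> a _; have [ta | nta] := boolP (t \in pa_delta s a); last first.
    by apply: series_rational0 => X [].
  by exists (e_atom a) => X /=; split=> [[]|].
- move=> phi _; have [tphi | ntphi] := boolP (t \in pa_gamma s phi); last first.
    by apply: series_rational0 => X [].
  have [e fork_e] : series_rational (fork_lang phi).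
    apply: series_rational_fork_lang => r r_phi; apply: IH.
    by apply: support_size_fork sq0 r_phi _; apply/set0Pn; exists t.
  by exists e => X; rewrite -fork_e; split=> [[]|].
Qed.

Lemma series_rational_accepted q : series_rational (accepted q).
Proof.
have [n] := ubnP (support_size q); elim: n q => // n IHn q q_n.
have IH r : support_size r < support_size q -> series_rational (accepted r).
  by move=> rq; apply: IHn; apply: leq_trans rq _; rewrite -ltnS.
have walk_rat := series_rational_walkT (fun s t => series_rational_local_transition s t IH).
apply: series_rational_ext (accepted_walk q) _; apply: series_rational_bigU => qf _.
have [qf_F | nqf_F] := boolP (qf \in pa_F A); last by apply: series_rational0 => P [].
apply: series_rational_ext
  (series_rationalU (L := fun P => q = qf /\ lp_n P = 0) _ (walk_rat q qf)).
  by move=> P; split=> [[] // | qfP]; split.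
have [<- | q_qf] := q =P qf; last by apply: series_rational0 => P [/q_qf].
by apply: series_rational_ext (series_rational1 Sigma) => P; split=> [[]|].
Qed.

End ForkAcyclic.
End FromAutomata.

Theorem theorem8p5 (Sigma : finType) (L : lposet Sigma -> Prop) :
  pomset_language L ->
  ((exists e : srexp Sigma, forall P, L P <-> sem e P) <->
   (exists (A : pomset_automaton Sigma) (q : pa_Q A),
      fork_acyclic A /\ forall P, L P <-> LA A q P)).
Proof.
move=> _; split=> [[e L_e] | [A [q [A_acyclic L_A]]]].
  exists (thompson e), (state_of e e); split; first exact: thompson_fork_acyclic.
  by move=> P; rewrite L_e; apply: thompson_correct.
have [e acc_e] := series_rational_accepted A_acyclic q.
exists e => P; rewrite L_A -acc_e; split=> [[] // | qP]; split=> //.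
exact: sem_SP (proj1 (acc_e P) qP).
Qed.
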